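(* Let $p$ be an odd prime and $G$ a finite non-abelian $2$-generated $p$-group with cyclic $G'$, with parameters and the fixed basis $(b_1,b_2)$ and $a=[b_2,b_1]$ as in the context. Then: (1) $\mathrm{Z}(G)\cap G'=\langle a^{p^{\max(o_1,o_2)}}\rangle$; (2) $\exp(G)=p^{\max(n_1+o'_1,n_2+o'_2)}$; (3) for $i\ge2$, $\gamma_i(G)=\langle a^{p^{(i-2)(m-\max(o_1,o_2))}}\rangle$, and the nilpotency class of $G$ is $1+\lceil m/(m-\max(o_1,o_2))\rceil$.
   Context: Conventions: $[x,y]=x^{-1}y^{-1}xy$, $x^y=y^{-1}xy$; $\gamma_i$ is the lower central series. Let $|G'|=p^m$, $G/G'\cong C_{p^{n_1}}\times C_{p^{n_2}}$, $n_1\ge n_2\ge1$. A basis is a pair $(b_1,b_2)$ with $G/G'=\langle b_1G'\rangle\times\langle b_2G'\rangle$ and $|b_iG'|=p^{n_i}$; $\mathcal{B}$ is the set of bases. For $g\in G$, $p^{o(g)}=|g{\rm C}_G(G')|$. $(o_1,o_2)=\min_{\mathrm{lex}}\{(o(b_1),o(b_2)):(b_1,b_2)\in\mathcal{B}\}$; $r_1=1+p^{m-o_1}$; $r_2=1+p^{m-o_2}$ if $o_2>o_1$, else $r_2=r_1^{p^{o_1-o_2}}$. $\mathcal{B}_r$ is the set of bases with $x^{b_i}=x^{r_i}$ for all $x\in G'$. For $b\in\mathcal{B}$, $|b_i|=p^{n_i+o'_i(b)}$ defines $o'_i(b)$; $(o'_1,o'_2)=\max_{\mathrm{lex}}\{(o'_1(b),o'_2(b)):b\in\mathcal{B}_r\}$.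 Fix $(b_1,b_2)\in\mathcal{B}_r$ with $(o'_1(b),o'_2(b))=(o'_1,o'_2)$ and put $a=[b_2,b_1]$ (a generator of $G'$, of order $p^m$). *)

From mathcomp Require Import all_boot all_fingroup all_solvable.
Set Implicit Arguments.
Unset Strict Implicit.
Unset Printing Implicit Defensive.
Import GroupScope.
Local Open Scope group_scope.

Section Params.
Variables (gT : finGroupType) (p : nat) (G : {group gT}).

Definition param_m : nat := logn p #|G^`(1)|.

(* G/G' ~ C_{p^n1} x C_{p^n2}, n1 >= n2:  p^n1 = exp(G/G'), p^(n1+n2) = |G/G'| *)
Definition param_n1 : nat := logn p (exponent (G / G^`(1))).
Definition param_n2 : nat := logn p #|G / G^`(1)| - param_n1.

Definition is_basis (b1 b2 : gT) : Prop :=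
  [/\ b1 \in G, b2 \in G,
      <[coset G^`(1) b1]> \x <[coset G^`(1) b2]> = G / G^`(1),
      #[coset G^`(1) b1] = (p ^ param_n1)%N
    & #[coset G^`(1) b2] = (p ^ param_n2)%N].

Definition o_of (g : gT) : nat := logn p #[coset 'C_G(G^`(1)) g].

Definition is_lexmin_o (o1 o2 : nat) : Prop :=
  (exists b1 b2, is_basis b1 b2 /\ o_of b1 = o1 /\ o_of b2 = o2) /\
  (forall b1 b2, is_basis b1 b2 ->
     (o1 < o_of b1)%N \/ (o1 = o_of b1 /\ (o2 <= o_of b2)%N)).

Definition r1_of (o1 : nat) : nat := (1 + p ^ (param_m - o1))%N.
Definition r2_of (o1 o2 : nat) : nat :=
  if (o1 < o2)%N then (1 + p ^ (param_m - o2))%N else (r1_of o1 ^ (p ^ (o1 - o2)))%N.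

Definition is_basis_r (o1 o2 : nat) (b1 b2 : gT) : Prop :=
  [/\ is_basis b1 b2,
      (forall x, x \in G^`(1) -> x ^ b1 = x ^+ r1_of o1)
    & (forall x, x \in G^`(1) -> x ^ b2 = x ^+ r2_of o1 o2)].

Definition o'1_of (b1 : gT) : nat := logn p #[b1] - param_n1.
Definition o'2_of (b2 : gT) : nat := logn p #[b2] - param_n2.

Definition is_lexmax_o' (o1 o2 o'1 o'2 : nat) : Prop :=
  (exists b1 b2, is_basis_r o1 o2 b1 b2 /\ o'1_of b1 = o'1 /\ o'2_of b2 = o'2) /\
  (forall b1 b2, is_basis_r o1 o2 b1 b2 ->
     (o'1_of b1 < o'1)%N \/ (o'1_of b1 = o'1 /\ (o'2_of b2 <= o'2)%N)).

End Params.

Definition ceil_div (a b : nat) : nat := (a + b - 1) %/ b.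

From mathcomp Require Import all_boot all_fingroup all_solvable.
From mathcomp Require Import ssralg zmodp ring zify.
Set Implicit Arguments.
Unset Strict Implicit.
Unset Printing Implicit Defensive.
Import GroupScope.
Local Open Scope nat_scope.

(* By the Burnside basis theorem G = <b1, b2>, so G' is generated by
   a = [b2, b1] and has order p^m.  Each b_i, hence every element of G, acts on
   the cyclic group G' as a power map x |-> x^(1 + p^d t) with d = m - max(o1, o2),
   and one of the b_i acts as x |-> x^(1 + p^d).  Therefore [<y>, G] = <y^(p^d)>
   for every y in G', which yields the lower central series, the class and the
   fixed points of G' under G.  For the exponent, collecting commutators gives
   (u v)^n = u^n v^n [v, u]^c(n) with p^k | c(p^k) since p is odd; thus
   g |-> g^(p^e) is multiplicative as soon as p^e kills G', and |G'| = |[b2, b1]|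
   divides |b2|. *)

Fixpoint geom_sum (b n : nat) : nat :=
  if n is n'.+1 then b * geom_sum b n' + 1 else 0.

(* The exponent of [~ v, u] in the collected form of (u * v) ^+ n when u and v
   act on [~ v, u] as the powers a and b; see expMg_collect. *)
Fixpoint collect_exp (a b n : nat) : nat :=
  if n is n'.+1 then b * (geom_sum b n' + a * collect_exp a b n') else 0.

Lemma geom_sumD b n k : geom_sum b (n + k) = b ^ k * geom_sum b n + geom_sum b k.
Proof.
elim: k => [|k IH]; first by rewrite /= !addn0 expn0 mul1n.
by rewrite addnS /= IH expnS; ring.
Qed.

Lemma geom_sumM b n k : geom_sum b (n * k) = geom_sum b n * geom_sum (b ^ n) k.
Proof.
elim: k => [|k IH]; first by rewrite muln0 /= muln0.
by rewrite mulnS addnC geom_sumD IH /=; ring.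
Qed.

Lemma collect_expD a b n k :
  collect_exp a b (n + k) =
    b ^ k * geom_sum b n * geom_sum a k + (a * b) ^ k * collect_exp a b n
    + collect_exp a b k.
Proof.
elim: k => [|k IH]; first by rewrite addn0 !muln0 mul1n addn0.
by rewrite addnS /= geom_sumD IH !expnS; ring.
Qed.

Lemma collect_exp_mul a b n j :
    n %| geom_sum a n -> n %| geom_sum b n ->
  exists y, collect_exp a b (j * n)
            = collect_exp a b n * geom_sum ((a * b) ^ n) j + n * n * y.
Proof.
move=> /dvdnP[s Sa] /dvdnP[t Sb].
elim: j => [|j [y IH]]; first by exists 0; rewrite /= !muln0.
exists (b ^ n * t * geom_sum (b ^ n) j * s + (a * b) ^ n * y).
by rewrite mulSnr collect_expD IH [j * n]mulnC geom_sumM Sa Sb /=; ring.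
Qed.

Section NatCast.
Import GRing.Theory.
Local Open Scope ring_scope.

Lemma natr_geom_sum (R : pzSemiRingType) b n :
  b%:R = 1 :> R -> (geom_sum b n)%:R = n%:R :> R.
Proof. by move=> b1; elim: n => //= n IH; rewrite natrD natrM b1 IH mul1r natr1. Qed.

Lemma natr_collect_exp (R : pzSemiRingType) a b n :
  a%:R = 1 :> R -> b%:R = 1 :> R -> (collect_exp a b n)%:R = 'C(n, 2)%:R :> R.
Proof.
move=> a1 b1; elim: n => //= n IH.
by rewrite natrM natrD natrM a1 b1 IH natr_geom_sum // !mul1r binS bin1 natrD addrC.
Qed.

Lemma Fp_natr_mod1 p b : prime p -> b = 1 %[mod p] -> b%:R = 1 :> 'F_p.
Proof. by move=> pr b1; rewrite -Fp_nat_mod // b1 Fp_nat_mod. Qed.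

Lemma Fp_natr_eq0 p n : prime p -> (n%:R == 0 :> 'F_p) = (p %| n).
Proof. by move=> pr; rewrite -val_eqE /= val_Fp_nat. Qed.

End NatCast.

Lemma expn_mod1 p b k : b = 1 %[mod p] -> b ^ k = 1 %[mod p].
Proof. by move=> b1; rewrite -modnXm b1 modnXm exp1n. Qed.

Lemma dvdn_geom_sum p b : prime p -> b = 1 %[mod p] -> p %| geom_sum b p.
Proof.
move=> pr b1; rewrite -Fp_natr_eq0 // (natr_geom_sum _ (Fp_natr_mod1 pr b1)).
by apply/eqP; apply: pchar_Fp_0.
Qed.

Lemma dvdn_geom_sum_pexp p b k :
  prime p -> b = 1 %[mod p] -> p ^ k %| geom_sum b (p ^ k).
Proof.
move=> pr b1; elim: k => [|k IH]; first by rewrite dvd1n.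
by rewrite expnSr geom_sumM dvdn_mul // dvdn_geom_sum // expn_mod1.
Qed.

Lemma dvdn_collect_exp p a b :
  prime p -> odd p -> a = 1 %[mod p] -> b = 1 %[mod p] -> p %| collect_exp a b p.
Proof.
move=> pr odd_p a1 b1.
rewrite -Fp_natr_eq0 // (natr_collect_exp _ (Fp_natr_mod1 pr a1) (Fp_natr_mod1 pr b1)).
by rewrite Fp_natr_eq0 // prime_dvd_bin // odd_prime_gt2.
Qed.

Lemma dvdn_collect_exp_pexp p a b k :
    prime p -> odd p -> a = 1 %[mod p] -> b = 1 %[mod p] ->
  p ^ k %| collect_exp a b (p ^ k).
Proof.
move=> pr odd_p a1 b1; elim: k => [|[|k] IH]; first by rewrite dvd1n.
  by rewrite expn1 dvdn_collect_exp.
set n := p ^ k.+1 in IH *.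
have [y ->] := collect_exp_mul p (dvdn_geom_sum_pexp k.+1 pr a1)
                                 (dvdn_geom_sum_pexp k.+1 pr b1).
have ab1 : (a * b) ^ n = 1 %[mod p] by rewrite expn_mod1 // -modnMm a1 b1 modnMm.
have p_n : p %| n by rewrite dvdn_exp.
rewrite expnSr -/n dvdn_add //; first exact: dvdn_mul IH (dvdn_geom_sum pr ab1).
by rewrite dvdn_mulr // dvdn_mul.
Qed.

Local Open Scope group_scope.

Section Collection.
Variables (gT : finGroupType) (u v : gT) (a b : nat).
Hypotheses (cu : [~ v, u] ^ u = [~ v, u] ^+ a) (cv : [~ v, u] ^ v = [~ v, u] ^+ b).

Lemma commXg_geom_sum n : [~ v ^+ n, u] = [~ v, u] ^+ geom_sum b n.
Proof.
elim: n => [|n IH]; first by rewrite expg0 comm1g.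
by rewrite expgSr commMgJ IH conjXg cv -expgM -expgSr /= addn1.
Qed.

Lemma expMg_collect n :
  (u * v) ^+ n = u ^+ n * v ^+ n * [~ v, u] ^+ collect_exp a b n.
Proof.
set c := [~ v, u].
have cXu k : c ^+ k * u = u * c ^+ (a * k) by rewrite conjgC conjXg cu expgM.
have cXv k : c ^+ k * v = v * c ^+ (b * k) by rewrite conjgC conjXg cv expgM.
elim: n => [|n IH]; first by rewrite !expg0 !mulg1.
have vXu : v ^+ n * u = u * v ^+ n * c ^+ geom_sum b n.
  by rewrite commgC commXg_geom_sum.
rewrite expgSr IH /= -[RHS]mulgA -[_ * _ * c ^+ _ * (u * v)]mulgA.
rewrite [c ^+ _ * (u * v)]mulgA cXu !mulgA -[u ^+ n * v ^+ n * u]mulgA vXu.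
rewrite !mulgA -expgSr -(mulgA (u ^+ n.+1 * v ^+ n)) -expgD -[LHS]mulgA cXv.
by rewrite mulgA -(mulgA (u ^+ n.+1) (v ^+ n)) -expgSr.
Qed.

End Collection.

Lemma gen_ind (gT : finGroupType) (X : {set gT}) (P : gT -> Prop) :
    P 1 -> (forall x y, P x -> P y -> P (x * y)) -> {in X, forall x, P x} ->
  {in <<X>>, forall g, P g}.
Proof.
move=> P1 PM PX g /gen_prodgP[n [f fX ->]].
by apply: big_ind => // i _; apply: PX.
Qed.

Section PowAction.
Variables (gT : finGroupType) (A : {group gT}) (q : nat).

Definition pow1_action (g : gT) :=
  exists t, {in A, forall x, x ^ g = x ^+ (1 + q * t)}.

Lemma pow1_action1 : pow1_action 1.
Proof. by exists 0 => x _; rewrite conjg1 muln0. Qed.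

Lemma pow1_actionM g h : pow1_action g -> pow1_action h -> pow1_action (g * h).
Proof.
move=> [t Hg] [s Hh]; exists (t + s + q * t * s) => x Ax.
rewrite conjgM Hg // conjXg Hh // -expgM; congr (_ ^+ _); ring.
Qed.

Lemma pow1_actionX g k : pow1_action g -> pow1_action (g ^+ k).
Proof.
move=> Hg; elim: k => [|k IH]; first exact: pow1_action1.
by rewrite expgSr; apply: pow1_actionM.
Qed.

Lemma pow_actionX g r k :
  {in A, forall x, x ^ g = x ^+ r} -> {in A, forall x, x ^ (g ^+ k) = x ^+ (r ^ k)}.
Proof.
move=> Hg; elim: k => [|k IH] x Ax; first by rewrite conjg1 expg1.
by rewrite expgSr conjgM IH // conjXg Hg // -expgM expnS.
Qed.

Lemma commg_pow1_action g x : pow1_action g -> x \in A -> [~ x, g] \in <[x ^+ q]>.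
Proof.
move=> [t Hg] Ax; rewrite commgEl Hg // expgD expg1 mulKg.
by rewrite expgM mem_cycle.
Qed.

End PowAction.

Lemma pow1_actionW (gT : finGroupType) (A : {group gT}) q q' g :
  q %| q' -> pow1_action A q' g -> pow1_action A q g.
Proof.
move=> /dvdnP[r ->] [t Hg]; exists (r * t)%N => x Ax.
by rewrite Hg // mulnA (mulnC r).
Qed.

Section TwoGenerator.
Variables (gT : finGroupType) (G : {group gT}).

Lemma pgroup_joing_cycles (p : nat) x y :
    p.-group G -> x \in G -> y \in G ->
    <[coset G^`(1) x]> <*> <[coset G^`(1) y]> = G / G^`(1) ->
  <[x]> <*> <[y]> = G.
Proof.
move=> pG xG yG defGq; have nG'G := normal_norm (der_normal 1 G).
apply: Phi_nongen; apply/eqP; rewrite eqEsubset join_subG Phi_sub /=.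
rewrite subUset !cycle_subG xG yG /=.
have sG_G'XY : G \subset G^`(1) * (<[x]> <*> <[y]>).
  rewrite -quotientSK // quotientY ?cycle_subG ?(subsetP nG'G) //.
  by rewrite !quotient_cycle ?(subsetP nG'G) // defGq.
apply: (subset_trans sG_G'XY); apply: mul_subG; last first.
  by apply: genS; rewrite subsetUr.
by rewrite (subset_trans _ (joing_subl _ _)) // (Phi_joing pG) joing_subl.
Qed.

Lemma der1_joing_cycles x y :
  cyclic G^`(1) -> <[x]> <*> <[y]> = G -> G^`(1) = <[[~ y, x]]>.
Proof.
move=> cycG' defG; have xG : x \in G by rewrite -defG mem_gen ?inE ?cycle_id.
have yG : y \in G by rewrite -defG mem_gen // inE cycle_id orbT.
have G'c : [~ y, x] \in G^`(1) by rewrite derg1 mem_commg.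
have nsCG : <[[~ y, x]]> <| G.
  by apply: char_normal_trans (der_normal 1 G); rewrite sub_cyclic_char ?cycle_subG.
have nCG := subsetP (normal_norm nsCG).
apply/eqP; rewrite eqEsubset cycle_subG G'c andbT der1_min ?normal_norm //.
rewrite -defG quotientY ?cycle_subG ?nCG // !quotient_cycle ?nCG //.
rewrite abelianY !cycle_abelian /= cent_cycle cycle_subG; apply/cent1P/commgP.
by rewrite -morphR ?nCG //; apply/eqP; apply: coset_id; apply: cycle_id.
Qed.

End TwoGenerator.

Lemma leq_ceil_div m d k : (0 < d -> (ceil_div m d <= k) = (m <= k * d))%N.
Proof. by move=> d_gt0; rewrite /ceil_div -ltnS ltn_divLR //; apply/idP/idP; lia. Qed.

Lemma nil_class_eq_lcn (gT : finGroupType) (G : {group gT}) n :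
  nilpotent G -> (forall k, ('L_k.+1(G) == 1) = (n <= k)%N) -> nil_class G = n.
Proof.
move=> nilG lcnE; apply/eqP; rewrite eqn_leq; apply/andP; split.
  by apply/(lcn_nil_classP _ nilG)/eqP; rewrite lcnE.
by rewrite -lcnE; apply/eqP/(lcn_nil_classP _ nilG).
Qed.

Section LowerCentral.
Variables (gT : finGroupType) (G : {group gT}) (q : nat) (a g0 : gT).
Hypotheses (defG' : G^`(1) = <[a]>)
           (pow1G : {in G, forall g, pow1_action G^`(1) q g})
           (g0G : g0 \in G)
           (g0_act : {in G^`(1), forall x, x ^ g0 = x ^+ (1 + q)}).

Lemma commg_cycle_der1 y : y \in G^`(1) -> [~: <[y]>, G] = <[y ^+ q]>.
Proof.
move=> G'y; apply/eqP; rewrite eqEsubset gen_subG; apply/andP; split.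
  apply/subsetP => _ /imset2P[_ g /cycleP[i ->] Gg ->].
  rewrite (subsetP _ _ (commg_pow1_action (pow1G Gg) (groupX i G'y))) //.
  by rewrite cycle_subG -expgM mulnC expgM mem_cycle.
have <- : [~ y, g0] = y ^+ q by rewrite commgEl g0_act // expgD expg1 mulKg.
by rewrite cycle_subG mem_commg ?cycle_id.
Qed.

Lemma lcn_der1_cycle k : 'L_k.+2(G) = <[a ^+ (q ^ k)]>.
Proof.
elim: k => [|k IH]; first by rewrite lcn2 defG' expg1.
by rewrite lcnSn IH commg_cycle_der1 ?defG' ?mem_cycle // -expgM expnSr.
Qed.

Lemma lcn_der1_cycle_eq1 k : ('L_k.+2(G) == 1) = (#[a] %| q ^ k).
Proof. by rewrite lcn_der1_cycle cycle_eq1 order_dvdn. Qed.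

Lemma der1_cycle_modulus_neq1 : nilpotent G -> ~~ abelian G -> q != 1%N.
Proof.
move=> nilG; apply: contraNneq => q1; apply/derG1P.
have /(lcn_nil_classP _ nilG) := leqnSn (nil_class G).
by rewrite lcn_der1_cycle q1 exp1n expg1 -defG'.
Qed.

Lemma center_der1 : q %| #[a] -> 'Z(G) :&: G^`(1) = <[a ^+ (#[a] %/ q)]>.
Proof.
move=> q_a; have q_gt0 : (0 < q)%N := dvdn_gt0 (order_gt0 a) q_a.
set z := a ^+ (#[a] %/ q).
have zq : z ^+ q = 1 by rewrite -expgM divnK // expg_order.
apply/eqP; rewrite eqEsubset; apply/andP; split.
  apply/subsetP => x /setIP[/centerP[_ cxG] G'x].
  have x_fix : x ^ g0 = x by rewrite conjgE (cxG g0 g0G) mulKg.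
  have : x ^+ q = 1.
    by apply: (mulgI x); rewrite mulg1 -expgS -add1n -g0_act // x_fix.
  rewrite defG' in G'x; case/cycleP: G'x => i ->.
  rewrite -expgM => /eqP; rewrite -order_dvdn -{1}(divnK q_a) dvdn_pmul2r //.
  by case/dvdnP => j ->; rewrite mulnC expgM mem_cycle.
have G'z : z \in G^`(1) by rewrite defG' mem_cycle.
rewrite cycle_subG inE G'z andbT; apply/centerP; split.
  exact: subsetP (der_sub 1 G) z G'z.
move=> g Gg; have [t Hg] := pow1G Gg.
by apply/commgP/conjg_fixP; rewrite Hg // expgD expg1 expgM zq expg1n mulg1.
Qed.

Lemma nil_class_der1_pcycle p m d :
    prime p -> (0 < d)%N -> q = (p ^ d)%N -> #[a] = (p ^ m)%N ->
    nilpotent G -> ~~ abelian G ->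
  nil_class G = (1 + ceil_div m d)%N.
Proof.
move=> pr_p d_gt0 qE oa nilG nabG; apply: nil_class_eq_lcn => // -[|k].
  by rewrite lcn1; apply/negbTE; apply: contraNneq nabG => ->; apply: abelian1.
rewrite lcn_der1_cycle_eq1 qE oa -expnM dvdn_Pexp2l ?prime_gt1 //.
by rewrite add1n ltnS leq_ceil_div // mulnC.
Qed.

End LowerCentral.

Section Exponent.
Variables (gT : finGroupType) (p : nat) (G : {group gT}).
Hypotheses (pr_p : prime p) (odd_p : odd p) (pG : p.-group G)
           (cycG' : cyclic G^`(1))
           (pow1G : {in G, forall g, pow1_action G^`(1) p g}).

Lemma expMg_pexp u v k :
    u \in G -> v \in G ->
  exists f, (u * v) ^+ (p ^ k) = u ^+ (p ^ k) * v ^+ (p ^ k) * [~ v, u] ^+ (p ^ k * f).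
Proof.
move=> Gu Gv; have G'c : [~ v, u] \in G^`(1) by rewrite derg1 mem_commg.
have [[t Hu] [s Hv]] := (pow1G Gu, pow1G Gv).
have mod1 n : (1 + p * n = 1 %[mod p])%N by rewrite addnC mulnC modnMDl.
rewrite (expMg_collect (Hu _ G'c) (Hv _ G'c)).
have [f ->] := dvdnP (dvdn_collect_exp_pexp k pr_p odd_p (mod1 t) (mod1 s)).
by exists f; rewrite mulnC.
Qed.

Lemma order_commg_dvd u g : u \in G -> g \in G -> #[[~ u, g]] %| #[u].
Proof.
move=> Gu Gg; set c := [~ u, g].
have G'c : c \in G^`(1) by rewrite derg1 mem_commg.
have Gc : c \in G := subsetP (der_sub 1 G) c G'c.
have [t Hu] := pow1G Gu.
have cu : [~ c, u] = c ^+ (p * t) by rewrite commgEl Hu // expgD expg1 mulKg.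
have [k ou] := p_natP (mem_p_elt pG Gu).
have [j oc] := p_natP (mem_p_elt pG Gc).
have [f] := expMg_pexp k Gu Gc.
rewrite -conjg_mulR -conjXg -ou expg_order conj1g mul1g cu -expgM -expgD.
have -> : (#[u] + p * t * (#[u] * f) = #[u] * (1 + p * (t * f)))%N by ring.
move/esym/eqP; rewrite -order_dvdn Gauss_dvdl // oc coprimeXl //.
by rewrite -coprime_modr addnC mulnC modnMDl coprime_modr coprimen1.
Qed.

Lemma exponent_joing_cycles x y :
  <[x]> <*> <[y]> = G -> exponent G = (p ^ maxn (logn p #[x]) (logn p #[y]))%N.
Proof.
move=> defG; set e := maxn _ _.
have Gx : x \in G by rewrite -defG mem_gen // inE cycle_id.
have Gy : y \in G by rewrite -defG mem_gen // inE cycle_id orbT.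
have ordG g : g \in G -> #[g] = (p ^ logn p #[g])%N.
  by move=> Gg; have [k ->] := p_natP (mem_p_elt pG Gg); rewrite pfactorK.
have ord_e g : g \in G -> (logn p #[g] <= e)%N -> g ^+ (p ^ e) = 1.
  by move=> Gg le_g; apply/eqP; rewrite -order_dvdn ordG // dvdn_exp2l.
have G'_e : #|G^`(1)| %| p ^ e.
  rewrite (der1_joing_cycles cycG' defG) (dvdn_trans (order_commg_dvd Gy Gx)) //.
  by rewrite ordG // dvdn_exp2l // leq_maxr.
have expM : {in G &, forall u v, (u * v) ^+ (p ^ e) = u ^+ (p ^ e) * v ^+ (p ^ e)}.
  move=> u v Gu Gv; have [f ->] := expMg_pexp e Gu Gv.
  have G'c : [~ v, u] \in G^`(1) by rewrite derg1 mem_commg.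
  suff cq : [~ v, u] ^+ (p ^ e) = 1 by rewrite expgM cq expg1n mulg1.
  by apply/eqP; rewrite -order_dvdn (dvdn_trans (order_dvdG G'c)).
have expG : {in G, forall g, g ^+ (p ^ e) = 1}.
  have : {in <[x]> <*> <[y]>, forall g, g \in G /\ g ^+ (p ^ e) = 1}.
    apply: gen_ind => [|u v [Gu uq] [Gv vq]|g /setUP[] /cycleP[i ->]].
    - by rewrite group1 expg1n.
    - by rewrite groupM // expM // uq vq mulg1.
    - by rewrite groupX // expgAC ord_e ?expg1n ?leq_maxl.
    - by rewrite groupX // expgAC ord_e ?expg1n ?leq_maxr.
  by rewrite defG => Hexp g /Hexp[].
apply/eqP; rewrite eqn_dvd; apply/andP; split; first exact/exponentP.
by rewrite /e; case: leqP => _; rewrite -ordG // dvdn_exponent.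
Qed.

End Exponent.

Section Basis.
Variables (gT : finGroupType) (p : nat) (G : {group gT}) (b1 b2 : gT).
Hypothesis Bb : is_basis p G b1 b2.

Lemma basis_joing_cycles : p.-group G -> <[b1]> <*> <[b2]> = G.
Proof.
by case: Bb => b1G b2G dpr _ _ pG; apply: pgroup_joing_cycles pG b1G b2G (dprodWY dpr).
Qed.

Lemma basis_logn_order :
    prime p ->
  (param_n1 p G + o'1_of p G b1 = logn p #[b1])%N /\
  (param_n2 p G + o'2_of p G b2 = logn p #[b2])%N.
Proof.
have [b1G b2G _ ob1 ob2] := Bb; move=> pr_p.
have nG'G := subsetP (normal_norm (der_normal 1 G)).
have le_n (b : gT) n : b \in G -> #[coset G^`(1) b] = (p ^ n)%N -> (n <= logn p #[b])%N.
  move=> Gb ob; rewrite -(pfactorK n pr_p) -ob.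
  exact: dvdn_leq_log (order_gt0 b) (morph_order _ (nG'G b Gb)).
by split; rewrite subnKC // le_n.
Qed.

End Basis.

Section BasisAction.
Variables (gT : finGroupType) (p : nat) (G : {group gT}) (o1 o2 : nat) (b1 b2 : gT).
Hypothesis Bb : is_basis_r p G o1 o2 b1 b2.
Local Notation d := (param_m p G - maxn o1 o2)%N.

Lemma basis_r_pow1_action :
  p.-group G -> {in G, forall g, pow1_action G^`(1) (p ^ d) g}.
Proof.
case: Bb => Bb' act1 act2 pG; rewrite /r2_of in act2.
have pow1_b1 : pow1_action G^`(1) (p ^ d) b1.
  exists (p ^ (param_m p G - o1 - d))%N => x G'x.
  by rewrite act1 // /r1_of -expnD subnKC // leq_sub2l // leq_maxl.
have pow1_b2 : pow1_action G^`(1) (p ^ d) b2.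
  case: ifP act2 => [o12|_] act2.
    by exists 1%N => x G'x; rewrite act2 // muln1 (maxn_idPr (ltnW o12)).
  have [s Hs] := pow1_actionX (p ^ (o1 - o2)) pow1_b1.
  by exists s => x G'x; rewrite act2 // -(pow_actionX _ act1) // Hs.
rewrite -(basis_joing_cycles Bb' pG).
apply: gen_ind => [|g h|g /setUP[] /cycleP[i ->]].
- exact: pow1_action1.
- exact: pow1_actionM.
- exact: pow1_actionX.
- exact: pow1_actionX.
Qed.

Lemma basis_r_exact_action :
  exists2 g0, g0 \in G & {in G^`(1), forall x, x ^ g0 = x ^+ (1 + p ^ d)}.
Proof.
case: Bb => [[b1G b2G _ _ _] act1 act2]; rewrite /r2_of in act2.
case: ltnP act2 => [o12|o21] act2.
  by exists b2 => // x G'x; rewrite act2.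
by exists b1 => // x G'x; rewrite act1.
Qed.

End BasisAction.

Theorem lemma3p5 (gT : finGroupType) (p : nat) (G : {group gT})
  (o1 o2 o'1 o'2 : nat) (b1 b2 : gT) :
  prime p -> odd p -> p.-group G -> ~~ abelian G ->
  (exists x y : gT, G :=: <<[set x; y]>>) ->
  cyclic G^`(1) ->
  is_lexmin_o p G o1 o2 ->
  is_lexmax_o' p G o1 o2 o'1 o'2 ->
  is_basis_r p G o1 o2 b1 b2 -> o'1_of p G b1 = o'1 -> o'2_of p G b2 = o'2 ->
  let m := param_m p G in
  let a := [~ b2, b1] in
  [/\ 'Z(G) :&: G^`(1) = <[a ^+ (p ^ maxn o1 o2)%N]>,
      exponent G = (p ^ maxn (param_n1 p G + o'1) (param_n2 p G + o'2))%N,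
      (forall i : nat, (2 <= i)%N ->
         'L_i(G) = <[a ^+ (p ^ ((i - 2) * (m - maxn o1 o2)))%N]>)
    & nil_class G = (1 + ceil_div m (m - maxn o1 o2))%N].
Proof.
move=> pr_p odd_p pG nabG _ cycG' _ _ Bb <- <- m a; have [Bb' _ _] := Bb.
have defG := basis_joing_cycles Bb' pG.
have defG' : G^`(1) = <[a]> := der1_joing_cycles cycG' defG.
have oa : #[a] = (p ^ m)%N.
  by rewrite /order -defG' (card_pgroup (pgroupS (der_sub 1 G) pG)).
have pow1G := basis_r_pow1_action Bb pG; have [g0 g0G g0_act] := basis_r_exact_action Bb.
rewrite -/m in pow1G g0_act; set d := (m - maxn o1 o2)%N in pow1G g0_act *.
have nilG := pgroup_nil pG.
have d_gt0 : (0 < d)%N.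
  have := der1_cycle_modulus_neq1 defG' pow1G g0G g0_act nilG nabG.
  by rewrite -(expn0 p) eqn_exp2l ?prime_gt1 // lt0n.
have [n1E n2E] := basis_logn_order Bb' pr_p.
split.
- rewrite (center_der1 defG' pow1G g0G g0_act) oa ?dvdn_exp2l ?leq_subr //.
  by rewrite -expnB ?prime_gt0 ?leq_subr // subKn // ltnW // -subn_gt0.
- rewrite n1E n2E; apply: exponent_joing_cycles => // g Gg.
  by apply: pow1_actionW (pow1G g Gg); apply: dvdn_exp.
- move=> [|[|k]] // _.
  by rewrite (lcn_der1_cycle defG' pow1G g0G g0_act) !subSS subn0 -expnM mulnC.
- exact: (nil_class_der1_pcycle defG' pow1G g0G g0_act pr_p d_gt0 (erefl _) oa).
Qed.
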